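(* For any fitness graph $\mathcal{G}$ and any seed set $S\subseteq V$, the Heterogeneous Moran process and the Loopy process started from $S$ have the same fixation probability.
   Context: A fitness graph is $\mathcal{G}=(G,(m,r))$ where $G=(V,E,w)$ is a strongly connected directed graph, $w(u,\cdot)$ is a probability distribution over out-neighbours of $u$, and $r,m\colon V\to(0,\infty)$. Without loss of generality every node has a self-loop $(u,u)\in E$ (with $w(u,u)=0$ if it was absent). For a configuration $X\subseteq V$ (set of mutants), $f_X(u)=m(u)$ if $u\in X$, else $r(u)$. Heterogeneous Moran process: from $X$, pick $u$ with probability $f_X(u)/\sum_v f_X(v)$, then $v$ with probability $w(u,v)$, and $v$ takes the type of $u$. Loopy process: let $f_{\max}=\max_{u\in V}\max\{r(u),m(u)\}$; from $X$, pick $u$ uniformly with probability $1/|V|$, then pick $v$ with probability $w_X(u,v)$, where $w_X(u,v)=\frac{f_X(u)}{f_{\max}}w(u,v)$ for $v\ne u$ and $w_X(u,u)=1-\frac{f_X(u)}{f_{\max}}(1-w(u,u))$, and $v$ takes the type of $u$. Both start at $S$; the fixation probability is the probability of eventually reaching configuration $V$. *)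

From HB Require Import structures.
From mathcomp Require Import all_boot all_order all_algebra.
From mathcomp Require Import all_classical all_reals topology normedtype sequences.
Set Implicit Arguments. Unset Strict Implicit. Unset Printing Implicit Defensive.
Import Order.TTheory GRing.Theory Num.Theory numFieldNormedType.Exports.
Local Open Scope ring_scope.

(* A fitness graph: V a finite vertex type, E the edge relation, w the edge
   weights (w u v = 0 when (u,v) is not an edge), r and m the resident and
   mutant fitnesses. *)
Definition is_fitness_graph (R : realType) (V : finType) (E : rel V)
    (w : V -> V -> R) (r m : V -> R) : Prop :=
  (forall u v, connect E u v) /\
  (forall u v, 0 <= w u v) /\
  (forall u v, ~~ E u v -> w u v = 0) /\
  (forall u, \sum_(v : V) w u v = 1) /\
  (forall u, 0 < r u) /\ (forall u, 0 < m u).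

Definition fit (R : realType) (V : finType) (r m : V -> R) (X : {set V}) (u : V) : R :=
  if u \in X then m u else r u.

(* configuration after u reproduces onto v *)
Definition upd (V : finType) (X : {set V}) (u v : V) : {set V} :=
  if u \in X then v |: X else X :\ v.

Definition moran_P (R : realType) (V : finType) (w : V -> V -> R) (r m : V -> R)
    (X Y : {set V}) : R :=
  \sum_(u : V) \sum_(v : V)
     (if upd X u v == Y then
        fit r m X u / (\sum_(x : V) fit r m X x) * w u v else 0).

Definition fmax (R : realType) (V : finType) (r m : V -> R) : R :=
  \big[Num.max/0]_(u : V) Num.max (r u) (m u).

Definition loopy_w (R : realType) (V : finType) (w : V -> V -> R) (r m : V -> R)
    (X : {set V}) (u v : V) : R :=
  if v == u then 1 - fit r m X u / fmax r m * (1 - w u u)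
  else fit r m X u / fmax r m * w u v.

Definition loopy_P (R : realType) (V : finType) (w : V -> V -> R) (r m : V -> R)
    (X Y : {set V}) : R :=
  \sum_(u : V) \sum_(v : V)
     (if upd X u v == Y then (#|V|%:R)^-1 * loopy_w w r m X u v else 0).

Fixpoint hit (R : realType) (V : finType) (P : {set V} -> {set V} -> R)
    (n : nat) (X : {set V}) : R :=
  if X == [set: V] then 1 else
  match n with
  | 0 => 0
  | n'.+1 => \sum_(Y : {set V}) P X Y * hit P n' Y
  end.

Definition fixprob (R : realType) (V : finType) (P : {set V} -> {set V} -> R)
    (S : {set V}) : R :=
  lim ((fun n : nat => hit P n S) @ \oo)%classic.

(* The fixation probability of a substochastic kernel P on configurations is
   the least g >= 0 with g V >= 1 and \sum_Y P X Y * g Y <= g X for X <> V.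
   One step of the Loopy process averages a function g to
   g X + c X * (M g X - g X), where M is the Moran kernel and
   c X = F X / (|V| fmax) > 0 with F X the total fitness of X.  Hence the two
   kernels have the same supersolutions, and thus the same fixation
   probability. *)
From HB Require Import structures.
From mathcomp Require Import all_boot all_order all_algebra.
From mathcomp Require Import all_classical all_reals topology normedtype sequences.
From mathcomp Require Import ring lra.
Import Order.TTheory GRing.Theory Num.Theory numFieldNormedType.Exports.
Local Open Scope ring_scope.

Section FixationProbability.
Context {R : realType} {V : finType} (P : {set V} -> {set V} -> R).

Definition hitting_supersolution (g : {set V} -> R) :=
  [/\ forall X, 0 <= g X, 1 <= g [set: V] &
      forall X, X != [set: V] -> \sum_Y P X Y * g Y <= g X].

Definition substochastic :=
  (forall X Y, 0 <= P X Y) /\ (forall X, \sum_Y P X Y <= 1).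

Lemma hit_setT n : hit P n [set: V] = 1.
Proof. by case: n => [|n] /=; rewrite eqxx. Qed.

Lemma fixprob_setT : fixprob P [set: V] = 1.
Proof. by rewrite /fixprob; under eq_fun do rewrite hit_setT; exact: lim_cst. Qed.

Lemma hitS_notT n X : X != [set: V] -> hit P n.+1 X = \sum_Y P X Y * hit P n Y.
Proof. by move=> /negbTE /= ->. Qed.

Hypothesis P_ge0 : forall X Y, 0 <= P X Y.
Hypothesis P_sum_le1 : forall X, \sum_Y P X Y <= 1.

Lemma hit_ge0 n X : 0 <= hit P n X.
Proof.
elim: n X => [|n IH] X /=; case: ifP => // _.
by apply: sumr_ge0 => Y _; rewrite mulr_ge0.
Qed.

Lemma hit_le_supersolution g n X :
  hitting_supersolution g -> hit P n X <= g X.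
Proof.
case=> g_ge0 g_setT g_super; elim: n X => [|n IH] X /=.
  by case: ifPn => [/eqP -> //|].
case: ifPn => [/eqP -> //| /g_super]; apply: le_trans.
by apply: ler_sum => Y _; apply: ler_wpM2l.
Qed.

Lemma hit_nondecreasing X : nondecreasing_seq (fun n => hit P n X).
Proof.
apply/nondecreasing_seqP => n; elim: n X => [|n IH] X /=; case: ifP => // _.
  by apply: sumr_ge0 => Y _; rewrite mulr_ge0 ?(hit_ge0 0).
by apply: ler_sum => Y _; apply: ler_wpM2l.
Qed.

Lemma const1_supersolution : hitting_supersolution (fun => 1).
Proof. by split=> // X _; under eq_bigr do rewrite mulr1. Qed.

Lemma hit_cvgn X : cvgn (fun n => hit P n X).
Proof.
apply: nondecreasing_is_cvgn; first exact: hit_nondecreasing.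
by exists 1 => _ [n _ <-]; apply: hit_le_supersolution const1_supersolution.
Qed.

Lemma hit_le_fixprob n X : hit P n X <= fixprob P X.
Proof. exact: (nondecreasing_cvgn_le (hit_nondecreasing X) (hit_cvgn X) n). Qed.

Lemma fixprob_le_supersolution g X :
  hitting_supersolution g -> fixprob P X <= g X.
Proof.
move=> g_super; apply: limr_le (hit_cvgn X) _.
by apply: nearW => n; apply: hit_le_supersolution.
Qed.

Lemma fixprob_supersolution : hitting_supersolution (fixprob P).
Proof.
split=> [X | | X X_notT].
- exact: le_trans (hit_ge0 0 X) (hit_le_fixprob 0 X).
- by rewrite -(hit_setT 0) hit_le_fixprob.
have sum_cvg : (\sum_Y P X Y * hit P n Y @[n --> \oo] -->
                \sum_Y P X Y * fixprob P Y)%classic.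
  apply: cvg_big => [|Y _]; first exact: add_continuous.
  exact: cvgMl_tmp (hit_cvgn Y).
apply: cvgr_to_le sum_cvg _; apply: nearW => n.
by rewrite -hitS_notT // hit_le_fixprob.
Qed.

End FixationProbability.

Lemma fixprob_eq_of_supersolutions (R : realType) (V : finType)
    (P Q : {set V} -> {set V} -> R) :
  substochastic P -> substochastic Q ->
  (forall g, hitting_supersolution P g <-> hitting_supersolution Q g) ->
  fixprob P =1 fixprob Q.
Proof.
move=> [P_ge0 P_le1] [Q_ge0 Q_le1] PQ X; apply/eqP; rewrite eq_le.
by apply/andP; split; apply: fixprob_le_supersolution => //;
  apply/PQ/fixprob_supersolution.
Qed.

Lemma sum_pushforward {R : pzSemiRingType} {I J T : finType}
    (f : I -> J -> T) (a : I -> J -> R) (g : T -> R) :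
  \sum_y (\sum_i \sum_j (if f i j == y then a i j else 0)) * g y =
  \sum_i \sum_j a i j * g (f i j).
Proof.
under eq_bigr do rewrite mulr_suml; rewrite exchange_big; apply: eq_bigr => i _.
under eq_bigr do rewrite mulr_suml; rewrite exchange_big; apply: eq_bigr => j _.
rewrite (bigD1 (f i j)) //= eqxx big1 ?addr0 // => y /negbTE.
by rewrite eq_sym => ->; rewrite mul0r.
Qed.

Lemma upd_id (V : finType) (X : {set V}) u : upd X u u = X.
Proof.
rewrite /upd; case: ifP => uX; apply/setP => x; rewrite !inE.
  by case: eqP => // ->.
by case: eqP => // ->; rewrite uX.
Qed.

Section MoranLoopy.
Context {R : realType} {V : finType} (w : V -> V -> R) (r m : V -> R).
Hypothesis w_ge0 : forall u v, 0 <= w u v.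
Hypothesis w_sum1 : forall u, \sum_v w u v = 1.
Hypothesis r_gt0 : forall u, 0 < r u.
Hypothesis m_gt0 : forall u, 0 < m u.
Variable u0 : V.

Let F X := \sum_x fit r m X x.

Lemma fit_gt0 X u : 0 < fit r m X u.
Proof. by rewrite /fit; case: ifP. Qed.

Lemma fit_le_fmax X u : fit r m X u <= fmax r m.
Proof.
apply: le_trans (le_bigmax _ _ u).
by rewrite /fit; case: ifP => _; rewrite le_max lexx ?orbT.
Qed.

Lemma fmax_gt0 : 0 < fmax r m.
Proof. exact: lt_le_trans (fit_gt0 [set: V] u0) (fit_le_fmax [set: V] u0). Qed.

Lemma total_fit_gt0 X : 0 < F X.
Proof.
rewrite /F (bigD1 u0) //= ltr_pwDl ?fit_gt0 //.
by apply: sumr_ge0 => x _; rewrite ltW ?fit_gt0.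
Qed.

Lemma natr_card_gt0 : 0 < #|V|%:R :> R.
Proof. by rewrite ltr0n; apply/card_gt0P; exists u0. Qed.

Lemma moran_P_mean X (g : {set V} -> R) :
  \sum_Y moran_P w r m X Y * g Y =
  \sum_u fit r m X u / F X * \sum_v w u v * g (upd X u v).
Proof.
rewrite sum_pushforward; apply: eq_bigr => u _; rewrite mulr_sumr.
by apply: eq_bigr => v _; rewrite mulrA.
Qed.

Lemma loopy_w_mean X u (g : {set V} -> R) :
  \sum_v loopy_w w r m X u v * g (upd X u v) =
  g X + fit r m X u / fmax r m * (\sum_v w u v * g (upd X u v) - g X).
Proof.
rewrite (bigD1 u) //= [in RHS](bigD1 u) //= upd_id /loopy_w eqxx.
under eq_bigr => v /negbTE -> do rewrite -mulrA.
rewrite -mulr_sumr; ring.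
Qed.

Definition loopy_rate X := F X / (#|V|%:R * fmax r m).

Lemma loopy_rate_gt0 X : 0 < loopy_rate X.
Proof. by rewrite divr_gt0 ?mulr_gt0 ?total_fit_gt0 ?natr_card_gt0 ?fmax_gt0. Qed.

Lemma loopy_P_mean X (g : {set V} -> R) :
  \sum_Y loopy_P w r m X Y * g Y =
  g X + loopy_rate X * (\sum_Y moran_P w r m X Y * g Y - g X).
Proof.
rewrite moran_P_mean sum_pushforward /loopy_rate.
set gw := fun u => \sum_v w u v * g (upd X u v).
set A := \sum_u fit r m X u * gw u.
transitivity
  (#|V|%:R^-1 * \sum_u (g X + fit r m X u / fmax r m * (gw u - g X))).
  rewrite mulr_sumr; apply: eq_bigr => u _; rewrite -loopy_w_mean mulr_sumr.
  by apply: eq_bigr => v _; rewrite mulrA.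
rewrite big_split sumr_const /= -mulr_natl.
have -> : \sum_u fit r m X u / fmax r m * (gw u - g X) =
          (fmax r m)^-1 * (A - F X * g X).
  by rewrite /A /F mulr_suml -sumrB mulr_sumr; apply: eq_bigr => u _; ring.
have -> : \sum_u fit r m X u / F X * gw u = (F X)^-1 * A.
  by rewrite /A mulr_sumr; apply: eq_bigr => u _; ring.
have n_neq0 := lt0r_neq0 natr_card_gt0; have fm_neq0 := lt0r_neq0 fmax_gt0.
have F_neq0 := lt0r_neq0 (total_fit_gt0 X).
by field; rewrite n_neq0 fm_neq0 F_neq0.
Qed.

Lemma moran_P_ge0 X Y : 0 <= moran_P w r m X Y.
Proof.
apply: sumr_ge0 => u _; apply: sumr_ge0 => v _; case: ifP => // _.
by rewrite mulr_ge0 // divr_ge0 // ltW // ?fit_gt0 // total_fit_gt0.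
Qed.

Lemma moran_P_sum1 X : \sum_Y moran_P w r m X Y = 1.
Proof.
transitivity (\sum_Y moran_P w r m X Y * 1).
  by apply: eq_bigr => Y _; rewrite mulr1.
rewrite moran_P_mean.
under eq_bigr do under eq_bigr do rewrite mulr1.
under eq_bigr do rewrite w_sum1 mulr1.
by rewrite -mulr_suml mulfV // lt0r_neq0 // total_fit_gt0.
Qed.

Lemma loopy_w_ge0 X u v : 0 <= loopy_w w r m X u v.
Proof.
have k_ge0 : 0 <= fit r m X u / fmax r m.
  by rewrite divr_ge0 // ltW // ?fit_gt0 // fmax_gt0.
rewrite /loopy_w; case: eqP => _; last exact: mulr_ge0.
have k_le1 : fit r m X u / fmax r m <= 1.
  by rewrite ler_pdivrMr ?mul1r ?fit_le_fmax ?fmax_gt0.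
have wuu_le1 : w u u <= 1 by rewrite -(w_sum1 u) (bigD1 u) //= lerDl sumr_ge0.
have := w_ge0 u u; nra.
Qed.

Lemma loopy_P_ge0 X Y : 0 <= loopy_P w r m X Y.
Proof.
apply: sumr_ge0 => u _; apply: sumr_ge0 => v _; case: ifP => // _.
by rewrite mulr_ge0 ?loopy_w_ge0 // invr_ge0 ler0n.
Qed.

Lemma loopy_P_sum1 X : \sum_Y loopy_P w r m X Y = 1.
Proof.
transitivity (\sum_Y loopy_P w r m X Y * 1).
  by apply: eq_bigr => Y _; rewrite mulr1.
rewrite loopy_P_mean.
under eq_bigr do rewrite mulr1.
by rewrite moran_P_sum1 subrr mulr0 addr0.
Qed.

Lemma moran_P_substochastic : substochastic (moran_P w r m).
Proof. by split=> [|X]; [exact: moran_P_ge0 | rewrite moran_P_sum1]. Qed.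

Lemma loopy_P_substochastic : substochastic (loopy_P w r m).
Proof. by split=> [|X]; [exact: loopy_P_ge0 | rewrite loopy_P_sum1]. Qed.

Lemma loopy_P_mean_le X (g : {set V} -> R) :
  (\sum_Y loopy_P w r m X Y * g Y <= g X) =
  (\sum_Y moran_P w r m X Y * g Y <= g X).
Proof. by rewrite loopy_P_mean gerDl pmulr_rle0 ?loopy_rate_gt0 // subr_le0. Qed.

Lemma moran_loopy_supersolution g :
  hitting_supersolution (moran_P w r m) g <->
  hitting_supersolution (loopy_P w r m) g.
Proof.
by split=> -[g_ge0 g_setT g_super]; split=> // X /g_super; rewrite loopy_P_mean_le.
Qed.

End MoranLoopy.

Theorem lemma5 (R : realType) (V : finType) (E : rel V) (w : V -> V -> R)
    (r m : V -> R) (S : {set V}) :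
  is_fitness_graph E w r m ->
  fixprob (moran_P w r m) S = fixprob (loopy_P w r m) S.
Proof.
case=> _ [w_ge0 [_ [w_sum1 [r_gt0 m_gt0]]]].
have [u0 _ | V_empty] := pickP (@predT V); last first.
  have -> : S = [set: V] by apply/setP => x; have := V_empty x.
  by rewrite !fixprob_setT.
apply: fixprob_eq_of_supersolutions.
- exact: (moran_P_substochastic w r m w_ge0 w_sum1 r_gt0 m_gt0 u0).
- exact: (loopy_P_substochastic w r m w_ge0 w_sum1 r_gt0 m_gt0 u0).
- exact: (moran_loopy_supersolution w r m r_gt0 m_gt0 u0).
Qed.
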